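(* Let $\Phi:\mathbf D\to\mathbf C$, $\Psi:\mathbf C\to\mathbf D$ (with homotopy $h$) be a deformation retract of finite-type chain complexes of real inner product spaces, and let $\mathcal M$ be its Morsification, with base $I^{\mathcal M}$ of $\mathbf C$ and set of critical cells $\mathcal M^0$. Then $$\mathrm{id}_{\mathbf C}-\Phi\Psi=\sum_{\alpha\in I^{\mathcal M}\setminus\mathcal M^0} i_\alpha\circ\pi_\alpha,$$ where $i_\alpha:C_\alpha\to\mathbf C$ is the inclusion of the summand and $\pi_\alpha:\mathbf C\to C_\alpha$ the projection along the other summands of the decomposition $\mathbf C_n=\bigoplus_{\alpha\in I^{\mathcal M}_n}C_\alpha$.
   Context: Deformation retract: chain maps with $\Psi\Phi=\mathrm{id}_{\mathbf D}$ and $\partial h+h\partial=\mathrm{id}_{\mathbf C}-\Phi\Psi$. One has $\mathbf C=\operatorname{Ker}\Psi\oplus\operatorname{Im}\Phi$ as chain complexes. The Morsification $\mathcal M$: give the subcomplex $\operatorname{Ker}\Psi$ (boundary $\partial'$) the restricted inner product and choose a Hodge basis of it, i.e. in each degree, via singular value decompositions, orthonormal bases $\mathcal R_+(\partial'_m)$ of $\operatorname{Im}\partial_m'^\dagger$ and $\mathcal L_+(\partial'_m)$ of $\operatorname{Im}\partial'_m$ with a bijection $v\mapsto w$, $\partial'_mv=\sigma w$, $\sigma>0$, together with a basis of $\operatorname{Ker}(\partial_m'^\dagger\partial'_m+\partial'_{m+1}\partial_{m+1}'^\dagger)$. The base $I^{\mathcal M}$ of $\mathbf C$ consists of the one-dimensional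 summands spanned by these vectors together with a decomposition of each $(\operatorname{Im}\Phi)_n$ into summands; the matching $\mathcal M$ consists of the edges $v\to w$ above, and the critical cells $\mathcal M^0$ are the unmatched ones. *)

(* Chain complexes of finite-dimensional real inner product
   spaces, in coordinates: C_n = 'rV[R]_(c n) with inner product given by a
   positive definite symmetric Gram matrix; linear maps act on row vectors
   (x |-> x *m A), so the composite "g after f" is the matrix  F *m G. *)
From HB Require Import structures.
From mathcomp Require Import all_boot all_order all_algebra.
From mathcomp Require Import reals.
Set Implicit Arguments. Unset Strict Implicit. Unset Printing Implicit Defensive.
Import Order.TTheory GRing.Theory Num.Theory.
Local Open Scope ring_scope.

Record defRetract (R : realType) := DefRetract {
  cdim : nat -> nat;
  ddim : nat -> nat;
  gram : forall n, 'M[R]_(cdim n);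
  gram_sym : forall n, (gram n)^T = gram n;
  gram_pos : forall n (x : 'rV[R]_(cdim n)), x != 0 -> 0 < (x *m gram n *m x^T) 0 0;
  dgram : forall n, 'M[R]_(ddim n);
  dgram_sym : forall n, (dgram n)^T = dgram n;
  dgram_pos : forall n (x : 'rV[R]_(ddim n)), x != 0 -> 0 < (x *m dgram n *m x^T) 0 0;
  finite_type : exists N, forall n, (N <= n)%N -> cdim n = 0%N /\ ddim n = 0%N;
  dC : forall n, 'M[R]_(cdim n.+1, cdim n);
  dD : forall n, 'M[R]_(ddim n.+1, ddim n);
  dC2 : forall n, dC n.+1 *m dC n = 0;
  dD2 : forall n, dD n.+1 *m dD n = 0;
  Phi : forall n, 'M[R]_(ddim n, cdim n);
  Psi : forall n, 'M[R]_(cdim n, ddim n);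
  Phi_chain : forall n, dD n *m Phi n = Phi n.+1 *m dC n;
  Psi_chain : forall n, dC n *m Psi n = Psi n.+1 *m dD n;
  PsiPhi : forall n, Phi n *m Psi n = 1%:M;
  hom : forall n, 'M[R]_(cdim n, cdim n.+1);
  hom_eq : forall n,
    hom n *m dC n +
      (match n as k return 'M[R]_(cdim k, cdim k) with
       | 0 => 0
       | m.+1 => dC m *m hom m
       end) = 1%:M - Psi n *m Phi n
}.

Section Morse.
Variables (R : realType) (X : defRetract R).
Local Notation c := (cdim X).
Local Notation d := (dC X).

Definition ipC n (x y : 'rV[R]_(c n)) : R := (x *m gram X n *m y^T) 0 0.

Definition inKer n (x : 'rV[R]_(c n)) : Prop := x *m Psi X n = 0.

Definition imB n (x : 'rV[R]_(c n)) : Prop :=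
  exists z : 'rV[R]_(c n.+1), inKer z /\ z *m d n = x.

(* x = d'^dagger_{n+1} y, the adjoint of d'_{n+1} : Ker Psi_{n+1} -> Ker Psi_n
   w.r.t. the restricted inner products (y in Ker Psi_n, x in Ker Psi_{n+1}) *)
Definition adjB n (y : 'rV[R]_(c n)) (x : 'rV[R]_(c n.+1)) : Prop :=
  inKer x /\ forall z : 'rV[R]_(c n.+1), inKer z -> ipC (z *m d n) y = ipC z x.

Definition imBadj n (x : 'rV[R]_(c n.+1)) : Prop :=
  exists y : 'rV[R]_(c n), inKer y /\ adjB y x.

(* u = d'^dagger_n d'_n x   (with d'_0 = 0) *)
Definition downLap (n : nat) : 'rV[R]_(c n) -> 'rV[R]_(c n) -> Prop :=
  match n as k return 'rV[R]_(c k) -> 'rV[R]_(c k) -> Prop with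
  | 0 => fun _ u => u = 0
  | m.+1 => fun x u => adjB (x *m d m) u
  end.

(* x in Ker (d'^dagger_n d'_n + d'_{n+1} d'^dagger_{n+1}) (inside Ker Psi_n) *)
Definition harmonic n (x : 'rV[R]_(c n)) : Prop :=
  inKer x /\ exists (u : 'rV[R]_(c n)) (t : 'rV[R]_(c n.+1)),
    downLap u x /\ adjB x t /\ u + t *m d n = 0.

End Morse.

(* For the boundary d'_{n+1} (C_{n+1} -> C_n): the rows of mV n form the
   orthonormal basis R_+(d'_{n+1}) of Im d'^dagger_{n+1}, the rows of mW n the
   orthonormal basis L_+(d'_{n+1}) of Im d'_{n+1}, and the common index
   i : 'I_(mr n) is the bijection v |-> w, with d' v_i = sigma_i w_i. *)
Record morsification (R : realType) (X : defRetract R) := Morsification {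
  mr : nat -> nat;
  mV : forall n, 'M[R]_(mr n, cdim X n.+1);
  mW : forall n, 'M[R]_(mr n, cdim X n);
  msigma : forall n, 'I_(mr n) -> R;
  mV_orth : forall n (i j : 'I_(mr n)),
    ipC (row i (mV n)) (row j (mV n)) = (i == j)%:R;
  mW_orth : forall n (i j : 'I_(mr n)),
    ipC (row i (mW n)) (row j (mW n)) = (i == j)%:R;
  mV_span : forall n (x : 'rV[R]_(cdim X n.+1)), (x <= mV n)%MS <-> imBadj x;
  mW_span : forall n (x : 'rV[R]_(cdim X n)), (x <= mW n)%MS <-> imB x;
  msigma_pos : forall n (i : 'I_(mr n)), 0 < msigma i;
  mVW : forall n (i : 'I_(mr n)), row i (mV n) *m dC X n = msigma i *: row i (mW n);
  mk : nat -> nat;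
  mH : forall n, 'M[R]_(mk n, cdim X n);
  mH_free : forall n, row_free (mH n);
  mH_span : forall n (x : 'rV[R]_(cdim X n)), (x <= mH n)%MS <-> harmonic x;
  (* decomposition of (Im Phi)_n into summands (row spaces of square matrices) *)
  mp : nat -> nat;
  mP : forall n, 'I_(mp n) -> 'M[R]_(cdim X n);
  mP_direct : forall n, mxdirect (\sum_(j < mp n) mP j)%MS;
  mP_sum : forall n, (\sum_(j < mp n) mP j == Phi X n)%MS
}.

Section Base.
Variables (R : realType) (X : defRetract R) (M : morsification X).
Local Notation c := (cdim X).

(* the v-vectors living in degree n: R_+(d'_n)  (none in degree 0) *)
Definition rv (n : nat) : nat :=
  match n with 0 => 0%N | m.+1 => mr M m end.
Definition Vdeg (n : nat) : 'M[R]_(rv n, c n) :=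
  match n as k return 'M[R]_(rv k, c k) with
  | 0 => 0
  | m.+1 => mV M m
  end.

(* the index set I^M_n of the base of C_n:
   R_+(d'_n) + L_+(d'_{n+1}) + harmonic basis + summands of (Im Phi)_n *)
Definition baseIdx (n : nat) : Type :=
  ('I_(rv n) + 'I_(mr M n) + 'I_(mk M n) + 'I_(mp M n))%type.

Definition summand n (a : baseIdx n) : 'M[R]_(c n) :=
  match a with
  | inl (inl (inl i)) => <<row i (Vdeg n)>>%MS
  | inl (inl (inr i)) => <<row i (mW M n)>>%MS
  | inl (inr i) => <<row i (mH M n)>>%MS
  | inr j => mP j
  end.

(* critical cells M^0: the unmatched summands (harmonic vectors and the
   summands of Im Phi); the matched ones are the v's and w's *)
Definition critical n (a : baseIdx n) : bool :=
  match a with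
  | inl (inl _) => false
  | _ => true
  end.

Definition incproj n (a : baseIdx n) : 'M[R]_(c n) :=
  proj_mx (summand a) (\sum_(b : baseIdx n | b != a) summand b)%MS.

End Base.

From Pilot Require Import Defs.
From mathcomp Require Import all_boot all_order all_algebra.
From mathcomp Require Import reals.
Import Order.TTheory GRing.Theory Num.Theory.
Local Open Scope ring_scope.
Set Implicit Arguments. Unset Strict Implicit. Unset Printing Implicit Defensive.

(* Both sides are endomorphisms of C_n, so it suffices to compare them on each
   summand C_b, and the summands span C_n: id - Phi Psi maps C_n onto Ker Psi,
   which the Hodge basis spans (a vector of Ker Psi orthogonal to Im d'^dagger is
   a cycle, hence by the homotopy a boundary of Ker Psi, hence 0 if also
   orthogonal to Im d'), while Phi Psi maps C_n onto Im Phi.  On the summands,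
   id - Phi Psi fixes the matched ones (they lie in Ker Psi) and kills the
   critical ones (harmonic vectors vanish, Im Phi is fixed by Phi Psi).  Finally
   a matched summand C_a, spanned by an orthonormal vector r_a, is separated from
   all other summands by x |-> <(id - Phi Psi) x, r_a> r_a, so the projection
   onto C_a along the others is the identity on C_a and 0 on every other C_b. *)

Section SeparatedSummands.
Variables (F : fieldType) (I : finType) (m : nat) (S : I -> 'M[F]_m).

Definition separates (a : I) (E : 'M[F]_m) :=
  forall b (y : 'rV_m), (y <= S b)%MS -> y *m E = if a == b then y else 0.

Lemma separates_capmx0 a E :
  separates a E -> (S a :&: \sum_(j | j != a) S j)%MS = 0.
Proof.
move=> sepE; apply/eqP/rowV0P => v; rewrite sub_capmx => /andP[va /sub_sumsmxP[u uv]].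
have := sepE a v va; rewrite eqxx => <-.
rewrite uv mulmx_suml big1 // => b ba.
by rewrite (sepE b) ?submxMl // eq_sym (negbTE ba).
Qed.

Lemma separates_proj a E b (y : 'rV_m) : separates a E -> (y <= S b)%MS ->
  y *m proj_mx (S a) (\sum_(j | j != a) S j)%MS = if a == b then y else 0.
Proof.
move=> /separates_capmx0 capS0; case: eqP => [<- | ab] yb.
  exact: proj_mx_id.
by apply: proj_mx_0 => //; apply: (sumsmx_sup b) yb; apply/eqP => ba; apply: ab.
Qed.

Hypothesis S_span : forall x : 'rV_m, (x <= \sum_b S b)%MS.

Lemma eq_mx_on_summands (A B : 'M[F]_m) :
  (forall b (y : 'rV_m), (y <= S b)%MS -> y *m A = y *m B) -> A = B.
Proof.
move=> eqAB; apply/row_matrixP => i; rewrite !rowE.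
have /sub_sumsmxP[u ->] := S_span (delta_mx 0 i).
by rewrite !mulmx_suml; apply: eq_bigr => b _; apply/eqAB/submxMl.
Qed.

Lemma sum_proj_separated (crit : pred I) (P : 'M[F]_m) (E : I -> 'M[F]_m) :
  (forall b (y : 'rV_m), (y <= S b)%MS -> y *m P = if crit b then 0 else y) ->
  (forall a, ~~ crit a -> separates a (E a)) ->
  \sum_(a | ~~ crit a) proj_mx (S a) (\sum_(j | j != a) S j)%MS = P.
Proof.
move=> P_S sepE; apply: eq_mx_on_summands => b y yb.
rewrite (P_S b) // mulmx_sumr.
have proj_y a : ~~ crit a -> y *m proj_mx (S a) (\sum_(j | j != a) S j)%MS
    = if a == b then y else 0.
  by move=> /sepE sepEa; apply: separates_proj sepEa yb.
case: ifP => critb.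
  apply: big1 => a ncrita; rewrite proj_y //.
  by case: eqP ncrita => // ->; rewrite critb.
rewrite (bigD1 b) ?critb //= proj_y ?critb // eqxx big1 ?addr0 // => a /andP[ncrita ab].
by rewrite proj_y // (negbTE ab).
Qed.
End SeparatedSummands.

Section KerPsi.
Variables (R : realType) (X : defRetract R).
Local Notation c := (cdim X).
Local Notation d := (dC X).

Lemma ipC_mxE n p q (A : 'M[R]_(p, c n)) (B : 'M[R]_(q, c n)) i j :
  (A *m gram X n *m B^T) i j = ipC (row i A) (row j B).
Proof.
have -> : (A *m gram X n *m B^T) i j = row i (A *m gram X n *m B^T) 0 j by rewrite !mxE.
rewrite /ipC !row_mul !mxE.
by apply: eq_bigr => k _; rewrite !mxE.
Qed.

Lemma ipC_mulmxl n p (u : 'rV[R]_p) (A : 'M[R]_(p, c n)) (y : 'rV[R]_(c n)) :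
  ipC (u *m A) y = \sum_j u 0 j * ipC (row j A) y.
Proof.
rewrite /ipC -!mulmxA mxE; apply: eq_bigr => j _.
by rewrite !mulmxA ipC_mxE row_id.
Qed.

Lemma ipCZl n a (x y : 'rV[R]_(c n)) : ipC (a *: x) y = a * ipC x y.
Proof. by rewrite /ipC -!scalemxAl mxE. Qed.

Lemma ipC0l n (y : 'rV[R]_(c n)) : ipC 0 y = 0.
Proof. by rewrite /ipC !mul0mx mxE. Qed.

Lemma ipC0r n (y : 'rV[R]_(c n)) : ipC y 0 = 0.
Proof. by rewrite /ipC trmx0 mulmx0 mxE. Qed.

Lemma ipC_eq0 n (x : 'rV[R]_(c n)) : ipC x x = 0 -> x = 0.
Proof.
move=> xx0; apply/eqP/negPn/negP => /gram_pos.
by rewrite -/(ipC x x) xx0 ltxx.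
Qed.

Lemma inKer_dC n (x : 'rV[R]_(c n.+1)) : inKer x -> inKer (x *m d n).
Proof. by rewrite /inKer -mulmxA Psi_chain mulmxA => ->; rewrite mul0mx. Qed.

Lemma imB_inKer n (x : 'rV[R]_(c n)) : imB x -> inKer x.
Proof. by case=> z [Kz <-]; apply: inKer_dC. Qed.

Lemma PsiPhi_dC n : Psi X n.+1 *m Phi X n.+1 *m d n = d n *m (Psi X n *m Phi X n).
Proof. by rewrite -mulmxA -Phi_chain !mulmxA Psi_chain. Qed.

Lemma inKer_PsiPhi n (x : 'rV[R]_(c n)) : inKer x -> x *m (Psi X n *m Phi X n) = 0.
Proof. by rewrite /inKer mulmxA => ->; rewrite mul0mx. Qed.

Lemma inKer_projKer n (x : 'rV[R]_(c n)) : inKer (x *m (1%:M - Psi X n *m Phi X n)).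
Proof. by rewrite /inKer mulmxBr mulmx1 mulmxBl -!mulmxA PsiPhi mulmx1 subrr. Qed.

Lemma PsiPhi_id n (y : 'rV[R]_(c n)) :
  (y <= Phi X n)%MS -> y *m (Psi X n *m Phi X n) = y.
Proof. by case/submxP => u ->; rewrite -mulmxA (mulmxA (Phi X n)) PsiPhi mul1mx. Qed.

Lemma inKer_rows n p (A : 'M[R]_(p, c n)) : (forall i, inKer (row i A)) -> A *m Psi X n = 0.
Proof. by move=> KA; apply/row_matrixP => i; rewrite row_mul row0 KA. Qed.

(* The witness [u] of [downLap u x] is the boundary [- d' t], so [d' u = 0] and
   [<x, x> = <d' x, d' u> = 0]. *)
Lemma harmonic_eq0 n (x : 'rV[R]_(c n)) : harmonic x -> x = 0.
Proof.
case: n x => [|m] x [Kx [u [t [ux [_ ut0]]]]]; first exact: ux.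
have uE : u = - (t *m d m.+1) by apply/eqP; rewrite -addr_eq0 ut0.
case: ux => _ /(_ x Kx); rewrite uE mulNmx -mulmxA dC2 mulmx0 oppr0 ipC0r.
by move/esym/ipC_eq0.
Qed.

(* As [id - Phi Psi] commutes with [d] and fixes [p], [p = d (h p)] is the
   boundary of [(id - Phi Psi) (h p)], which lies in [Ker Psi]. *)
Lemma imB_hom_dC n (p : 'rV[R]_(c n)) :
  inKer p -> p *m Defs.hom X n *m d n = p -> imB p.
Proof.
move=> Kp php; exists (p *m Defs.hom X n *m (1%:M - Psi X n.+1 *m Phi X n.+1)).
split; first exact: inKer_projKer.
by rewrite -mulmxA mulmxBl mul1mx PsiPhi_dC mulmxBr !mulmxA php -mulmxA inKer_PsiPhi ?subr0.
Qed.

End KerPsi.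

Section Hodge.
Variables (R : realType) (X : defRetract R) (M : morsification X).
Local Notation c := (cdim X).
Local Notation d := (dC X).
Local Notation G := (gram X).

Lemma mW_imB n i : imB (row i (mW M n)).
Proof. by apply/mW_span/row_sub. Qed.

Lemma mV_imBadj n i : imBadj (row i (mV M n)).
Proof. by apply/mV_span/row_sub. Qed.

Lemma mW_Psi0 n : mW M n *m Psi X n = 0.
Proof. by apply: inKer_rows => i; exact: imB_inKer (mW_imB i). Qed.

Lemma Vdeg_Psi0 n : Vdeg M n *m Psi X n = 0.
Proof.
case: n => [|m] /=; first by rewrite flatmx0.
by apply: inKer_rows => i; have [y [_ []]] := mV_imBadj i.
Qed.

Lemma Vdeg_orthonormal n : Vdeg M n *m G n *m (Vdeg M n)^T = 1%:M.
Proof.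
case: n => [|m] /=; first by rewrite flatmx0 [RHS]flatmx0.
by apply/matrixP => i j; rewrite ipC_mxE mV_orth !mxE.
Qed.

Lemma mW_orthonormal n : mW M n *m G n *m (mW M n)^T = 1%:M.
Proof. by apply/matrixP => i j; rewrite ipC_mxE mW_orth !mxE. Qed.

Lemma mW_Vdeg_orthogonal n : mW M n *m G n *m (Vdeg M n)^T = 0.
Proof.
case: n => [|m] /=; first by rewrite thinmx0.
apply/matrixP => i j; rewrite ipC_mxE mxE.
have [y [_ [_ adj_y]]] := mV_imBadj j; have [z [Kz <-]] := mW_imB i.
rewrite -adj_y; last exact: inKer_dC.
by rewrite -mulmxA dC2 mulmx0 ipC0l.
Qed.

Lemma Vdeg_mW_orthogonal n : Vdeg M n *m G n *m (mW M n)^T = 0.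
Proof.
apply: trmx_inj; rewrite !trmx_mul trmxK gram_sym trmx0 mulmxA.
exact: mW_Vdeg_orthogonal.
Qed.

(* With [v_i = d'^dagger y_i]: [<w_j, y_i> = <v_j, v_i> / sigma_j = delta_ij / sigma_i],
   so the [i]-th coordinate of [d' p] on the [w]'s is [sigma_i <p, v_i> = 0]. *)
Lemma orth_mV_dC0 m (p : 'rV[R]_(c m.+1)) :
  inKer p -> p *m G m.+1 *m (mV M m)^T = 0 -> p *m d m = 0.
Proof.
move=> Kp pV0.
have /submxP[u pdE] : (p *m d m <= mW M m)%MS by apply/mW_span; exists p.
suff u0 : u = 0 by rewrite pdE u0 mul0mx.
apply/rowP => i; rewrite [RHS]mxE.
have [y [_ [_ adj_y]]] := mV_imBadj i.
have wy j : ipC (row j (mW M m)) y = (j == i)%:R / msigma j.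
  have [y' [_ [Kv _]]] := mV_imBadj j.
  rewrite -[LHS](mulKf (lt0r_neq0 (msigma_pos j))) -ipCZl -mVW adj_y //.
  by rewrite mV_orth mulrC.
have : ipC (p *m d m) y = 0.
  by rewrite adj_y // -(row_id 0 p) -ipC_mxE pV0 mxE.
rewrite pdE ipC_mulmxl (bigD1 i) //= big1 ?addr0 => [|j /negPf ji]; last first.
  by rewrite wy ji mul0r mulr0.
by rewrite wy eqxx mul1r => /eqP; rewrite mulf_eq0 invr_eq0 (gt_eqF (msigma_pos i)) orbF => /eqP.
Qed.

Lemma orth_Vdeg_mW_eq0 n (p : 'rV[R]_(c n)) :
  inKer p -> p *m G n *m (Vdeg M n)^T = 0 -> p *m G n *m (mW M n)^T = 0 -> p = 0.
Proof.
move=> Kp pV0 pW0.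
have php : p *m Defs.hom X n *m d n = p.
  have := congr1 (mulmx p) (hom_eq X n).
  rewrite mulmxDr mulmxBr mulmx1 inKer_PsiPhi // subr0 mulmxA.
  case: n p Kp pV0 pW0 => [|m] p Kp pV0 _ /=; first by rewrite mulmx0 addr0.
  by rewrite mulmxA (orth_mV_dC0 Kp pV0) mul0mx addr0.
have /submxP[u pE] : (p <= mW M n)%MS by apply/mW_span/imB_hom_dC.
by apply: ipC_eq0; rewrite /ipC {2}pE trmx_mul mulmxA pW0 mul0mx mxE.
Qed.

Lemma inKer_hodge n (k : 'rV[R]_(c n)) : inKer k ->
  k = k *m G n *m (Vdeg M n)^T *m Vdeg M n + k *m G n *m (mW M n)^T *m mW M n.
Proof.
move=> Kk; apply/eqP; rewrite -subr_eq0; apply/eqP.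
have mulmxA3 p q (u : 'rV[R]_p) (A : 'M_(p, c n)) (B : 'M_(q, c n)) :
  u *m A *m G n *m B^T = u *m (A *m G n *m B^T) by rewrite !mulmxA.
apply: orth_Vdeg_mW_eq0; rewrite ?/inKer !mulmxBl !mulmxDl ?mulmxA3.
- by rewrite -!mulmxA Vdeg_Psi0 mW_Psi0 !mulmx0 Kk addr0 subrr.
- by rewrite Vdeg_orthonormal mW_Vdeg_orthogonal !mulmx0 mulmx1 addr0 subrr.
- by rewrite Vdeg_mW_orthogonal mW_orthonormal !mulmx0 mulmx1 add0r subrr.
Qed.

Lemma summands_span n (x : 'rV[R]_(c n)) : (x <= \sum_(b : baseIdx M n) summand b)%MS.
Proof.
have -> : x = x *m (1%:M - Psi X n *m Phi X n) + x *m (Psi X n *m Phi X n).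
  by rewrite mulmxBr mulmx1 subrK.
rewrite (inKer_hodge (inKer_projKer x)) mulmxA !addmx_sub //; apply: submx_trans (submxMl _ _) _.
- by apply/row_subP => i; apply: (sumsmx_sup (inl (inl (inl i)))); rewrite ?genmxE.
- by apply/row_subP => i; apply: (sumsmx_sup (inl (inl (inr i)))); rewrite ?genmxE.
- have /andP[_ Phi_sub] := mP_sum M n; apply: submx_trans Phi_sub _.
  by apply/sumsmx_subP => j _; apply: (sumsmx_sup (inr j)).
Qed.

Lemma projKer_summand n (b : baseIdx M n) (y : 'rV[R]_(c n)) : (y <= summand b)%MS ->
  y *m (1%:M - Psi X n *m Phi X n) = if critical b then 0 else y.
Proof.
rewrite mulmxBr mulmx1.
case: b => [[[i|i]|i]|j] /=; rewrite ?genmxE => yb.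
- have /submxP[u ->] := submx_trans yb (row_sub i _).
  by rewrite !mulmxA -(mulmxA u) Vdeg_Psi0 mulmx0 mul0mx subr0.
- have /submxP[u ->] := submx_trans yb (row_sub i _).
  by rewrite !mulmxA -(mulmxA u) mW_Psi0 mulmx0 mul0mx subr0.
- suff -> : y = 0 by rewrite mul0mx subrr.
  by apply/harmonic_eq0/(mH_span M)/(submx_trans yb (row_sub i _)).
- have /andP[sum_sub _] := mP_sum M n.
  by rewrite PsiPhi_id ?subrr // (submx_trans yb) // (submx_trans _ sum_sub) // (sumsmx_sup j).
Qed.

Definition cell_vec n (a : baseIdx M n) : 'rV[R]_(c n) :=
  match a with
  | inl (inl (inl i)) => row i (Vdeg M n)
  | inl (inl (inr i)) => row i (mW M n)
  | _ => 0
  end.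

Lemma summand_cell_vec n (b : baseIdx M n) (y : 'rV[R]_(c n)) :
  ~~ critical b -> (y <= summand b)%MS -> exists t, y = t *: cell_vec b.
Proof. by case: b => [[[i|i]|i]|j] //= _; rewrite genmxE => /sub_rVP. Qed.

Lemma cell_vec_orthonormal n (a b : baseIdx M n) : ~~ critical a -> ~~ critical b ->
  ipC (cell_vec b) (cell_vec a) = (a == b)%:R.
Proof.
case: a => [[[i|i]|i]|j] //= _; case: b => [[[k|k]|k]|l] //= _; rewrite -ipC_mxE.
- by rewrite Vdeg_orthonormal mxE eq_sym.
- by rewrite mW_Vdeg_orthogonal mxE.
- by rewrite Vdeg_mW_orthogonal mxE.
- by rewrite mW_orthonormal mxE eq_sym.
Qed.

Definition cell_proj n (a : baseIdx M n) : 'M[R]_(c n) :=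
  (1%:M - Psi X n *m Phi X n) *m G n *m (cell_vec a)^T *m cell_vec a.

Lemma separates_cell_proj n (a : baseIdx M n) :
  ~~ critical a -> separates (@summand _ _ M n) a (cell_proj a).
Proof.
move=> nca b y yb; rewrite /cell_proj !mulmxA (projKer_summand yb).
case: ifP => [cb | ncb]; first by case: eqP nca => [->|_ _]; rewrite ?cb ?mul0mx.
have [t ->] := summand_cell_vec (negbT ncb) yb.
rewrite -!scalemxAl [_ *m _^T]mx11_scalar -/(ipC _ _) cell_vec_orthonormal ?ncb //.
by rewrite mul_scalar_mx; case: eqP => [->|_]; rewrite ?scale1r ?scale0r ?scaler0.
Qed.

End Hodge.

Unset Implicit Arguments.

Theorem mainTheorem7 (R : realType) (X : defRetract R) (M : morsification X)
  (n : nat) :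
  \sum_(a : baseIdx M n | ~~ critical a) incproj a = 1%:M - Psi X n *m Phi X n.
Proof.
apply: (sum_proj_separated (@summands_span _ _ M n)).
- exact: projKer_summand.
- exact: separates_cell_proj.
Qed.
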